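(* Let $\alpha\in(0,1]$. Let $G$ be an $r$-regular graph on $n$ vertices that is determined by its $A_\alpha$-spectrum, let $m\ge1$, and let $H$ be a graph that is $A_\alpha$-cospectral with $G\vee K_m$. If $H$ has (at least) $m$ vertices of degree $n+m-1$, then $H\cong G\vee K_m$.
   Context: All graphs are finite, simple and undirected. For a graph $G$, $A(G)$ is its adjacency matrix, $D(G)$ its diagonal degree matrix, and $A_\alpha(G)=\alpha D(G)+(1-\alpha)A(G)$. Two graphs are $A_\alpha$-cospectral if $A_\alpha$ of each has the same multiset of eigenvalues; a graph is determined by its $A_\alpha$-spectrum if every graph $A_\alpha$-cospectral with it is isomorphic to it. $K_m$ is the complete graph on $m$ vertices and $G\vee H$ is the join (disjoint union plus all edges between the two vertex sets). *)

From HB Require Import structures.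
From mathcomp Require Import all_boot all_order all_algebra.
Set Implicit Arguments. Unset Strict Implicit. Unset Printing Implicit Defensive.
Import Order.TTheory GRing.Theory Num.Theory.
Local Open Scope ring_scope.

Record graph := Graph {
  gsize : nat;
  gadj : rel 'I_gsize;
  gadj_sym : symmetric gadj;
  gadj_irr : irreflexive gadj }.
Arguments gadj : clear implicits.

Definition deg (G : graph) (v : 'I_(gsize G)) : nat := #|[set w | gadj G v w]|.

Arguments deg : clear implicits.
Definition regular (G : graph) (r : nat) : Prop := forall v, deg G v = r.

Definition adjmx (R : rcfType) (G : graph) : 'M[R]_(gsize G) :=
  \matrix_(i, j) (gadj G i j)%:R.
Definition degmx (R : rcfType) (G : graph) : 'M[R]_(gsize G) :=
  diag_mx (\row_i (deg G i)%:R).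
Definition Aalpha (R : rcfType) (alpha : R) (G : graph) : 'M[R]_(gsize G) :=
  alpha *: degmx R G + (1 - alpha) *: adjmx R G.

(* A_alpha-cospectral: same multiset of eigenvalues, i.e. the same
   characteristic polynomial (the characteristic polynomial of a real
   symmetric matrix splits over R, its roots with multiplicity being the
   eigenvalues). *)
Definition Aalpha_cospectral (R : rcfType) (alpha : R) (G H : graph) : Prop :=
  char_poly (Aalpha alpha G) = char_poly (Aalpha alpha H).

Definition isomorphic (G H : graph) : Prop :=
  exists f : 'I_(gsize G) -> 'I_(gsize H),
    bijective f /\ forall x y, gadj H (f x) (f y) = gadj G x y.

Definition Aalpha_determined (R : rcfType) (alpha : R) (G : graph) : Prop :=
  forall H : graph, Aalpha_cospectral alpha H G -> isomorphic H G.

Definition complete_adj (m : nat) : rel 'I_m := fun i j => i != j.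
Lemma complete_sym m : symmetric (@complete_adj m).
Proof. by move=> i j; rewrite /complete_adj eq_sym. Qed.
Lemma complete_irr m : irreflexive (@complete_adj m).
Proof. by move=> i; rewrite /complete_adj eqxx. Qed.
Definition complete (m : nat) : graph := Graph (@complete_sym m) (@complete_irr m).

Definition join_adj (G H : graph) : rel 'I_(gsize G + gsize H) :=
  fun i j => match split i, split j with
             | inl a, inl b => gadj G a b
             | inr a, inr b => gadj H a b
             | _, _ => true
             end.
Arguments join_adj : clear implicits.
Lemma join_sym G H : symmetric (join_adj G H).
Proof.
move=> i j; rewrite /join_adj.
by case: (split i) => a; case: (split j) => b //; apply: gadj_sym.
Qed.
Lemma join_irr G H : irreflexive (join_adj G H).
Proof. by move=> i; rewrite /join_adj; case: (split i) => a; apply: gadj_irr. Qed.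
Definition join (G H : graph) : graph := Graph (@join_sym G H) (@join_irr G H).

From HB Require Import structures.
From mathcomp Require Import all_boot all_order all_algebra.
From mathcomp Require Import fingroup perm ring zify.
Import Order.TTheory GRing.Theory Num.Theory.
Set Implicit Arguments. Unset Strict Implicit. Unset Printing Implicit Defensive.
Local Open Scope ring_scope.

(* The m vertices of degree |V(H)| - 1 are adjacent to everything, so H is the
   join of K_m with the graph H' induced on the other n vertices.  The traces
   of A_alpha and A_alpha^2 are spectral invariants; for a join with K_m they
   determine the first two moments of the degrees of H', which therefore
   coincide with those of the r-regular G: the degree variance of H' vanishes
   and H' is r-regular.  For an r-regular X the all-ones vector is an
   eigenvector of A_alpha(X), so the Schur complement of t - A_alpha(X) in
   t - A_alpha(X \/ K_m) depends on n, m, r and t only; hence H' is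
   A_alpha-cospectral with G, so H' ~ G and H ~ G \/ K_m. *)

Section PolyIdentity.
Variable R : numDomainType.

Lemma poly_natr_inj (p q : {poly R}) :
  (forall k : nat, p.[k%:R] = q.[k%:R]) -> p = q.
Proof.
move=> Epq; apply/eqP; rewrite -subr_eq0; apply/negPn/negP => pq_neq0.
set rs := [seq (k%:R : R) | k <- iota 0 (size (p - q))].
have rs_roots : all (root (p - q)) rs.
  by apply/allP => x /mapP [k _ ->]; rewrite /root hornerD hornerN Epq subrr.
have rs_uniq : uniq rs.
  by rewrite map_inj_uniq ?iota_uniq // => a b /eqP; rewrite eqr_nat => /eqP.
by move: (max_poly_roots pq_neq0 rs_roots rs_uniq); rewrite size_map size_iota ltnn.
Qed.

Lemma poly_eq_off_root (Q p q : {poly R}) : Q != 0 ->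
  (forall t, ~~ root Q t -> p.[t] = q.[t]) -> p = q.
Proof.
move=> Q_neq0 Epq.
suff /eqP : Q * (p - q) = 0 by rewrite mulf_eq0 (negbTE Q_neq0) subr_eq0 => /eqP.
apply: poly_natr_inj => k; rewrite horner0 hornerM.
have [/eqP ->|Qk] := boolP (root Q k%:R); first by rewrite mul0r.
by rewrite hornerD hornerN Epq // subrr mulr0.
Qed.

End PolyIdentity.

Section CharPoly.
Variable R : comNzRingType.

Lemma horner_char_poly n (A : 'M[R]_n) t : (char_poly A).[t] = \det (t%:M - A).
Proof.
rewrite /char_poly -horner_evalE -det_map_mx; congr (\det _).
apply/matrixP => i j; rewrite !mxE /= horner_evalE hornerD hornerN hornerC hornerMn hornerX.
by case: (i == j).
Qed.

(* (t - A)(-t - A) = -(t^2 - A^2) *)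
Lemma horner_char_poly_sqr n (A : 'M[R]_n) t :
  (char_poly A).[t] * (char_poly A).[- t] = (-1) ^+ n * (char_poly (A *m A)).[t ^+ 2].
Proof.
rewrite !horner_char_poly -det_mulmx -detZ; congr (\det _).
rewrite mulmxBl !mulmxBr -scalar_mxM mul_scalar_mx mul_mx_scalar scaleN1r opprB.
rewrite scaleNr mulrN -expr2 opprB opprK (raddfN (@scalar_mx R n) (t ^+ 2)).
by rewrite addrCA !addrA subrK.
Qed.

Lemma char_poly_size_eq n1 n2 (A : 'M[R]_n1) (B : 'M[R]_n2) :
  char_poly A = char_poly B -> n1 = n2.
Proof. by move=> E; have := size_char_poly A; rewrite E size_char_poly => -[]. Qed.

Lemma mxtrace_char_poly_eq n1 n2 (A : 'M[R]_n1) (B : 'M[R]_n2) :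
  char_poly A = char_poly B -> \tr A = \tr B.
Proof.
move=> E; have e := char_poly_size_eq E; case: n2 / e B E => B E.
case: n1 A B E => [|n] A B E; first by rewrite /mxtrace !big_ord0.
by apply: oppr_inj; rewrite -!char_poly_trace // E.
Qed.

Lemma char_poly_reindex n1 n2 (A : 'M[R]_n1) (B : 'M[R]_n2) (f : 'I_n1 -> 'I_n2) :
  n1 = n2 -> bijective f -> (forall i j, A i j = B (f i) (f j)) ->
  char_poly A = char_poly B.
Proof.
move=> e; case: n2 / e B f => B f f_bij EAB.
pose s := perm (bij_inj f_bij).
rewrite /char_poly.
have -> : char_poly_mx A = row_perm s (col_perm s (char_poly_mx B)).
  by apply/matrixP => i j; rewrite !mxE !permE EAB (inj_eq (bij_inj f_bij)).
rewrite row_permE col_permE !det_mulmx !det_perm odd_permV.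
by rewrite mulrCA -signr_addb addbb mulr1.
Qed.

End CharPoly.

Lemma char_poly_sqr_eq (R : rcfType) n1 n2 (A : 'M[R]_n1) (B : 'M[R]_n2) :
  char_poly A = char_poly B -> char_poly (A *m A) = char_poly (B *m B).
Proof.
move=> E; have e := char_poly_size_eq E; case: n2 / e B E => B E.
apply: poly_natr_inj => k; rewrite -(sqr_sqrtr (ler0n R k)).
have := horner_char_poly_sqr A (Num.sqrt k%:R).
by rewrite E horner_char_poly_sqr => /(congr1 ( *%R ((-1) ^+ n1))); rewrite !signrMK.
Qed.

Lemma det_block_mx_schur (F : fieldType) n m (A : 'M[F]_n) (B : 'M[F]_(n, m))
    (C : 'M[F]_(m, n)) (D : 'M[F]_m) : A \in unitmx ->
  \det (block_mx A B C D) = \det A * \det (D - C *m invmx A *m B).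
Proof.
move=> A_unit.
have -> : block_mx A B C D = block_mx A 0 C 1%:M *m
           block_mx 1%:M (invmx A *m B) 0 (D - C *m invmx A *m B).
  rewrite mulmx_block !mulmx0 !mulmx1 !mul0mx !addr0 mulmxA mulmxV // !mul1mx.
  by rewrite mulmxA addrC subrK.
by rewrite det_mulmx det_lblock det_ublock !det1 mulr1 mul1r.
Qed.

Lemma sum_sqr_eq_const (R : realDomainType) n (x : 'I_n -> R) c :
  \sum_i x i = c *+ n -> \sum_i x i ^+ 2 = c ^+ 2 *+ n -> forall i, x i = c.
Proof.
move=> Sx Sx2 i.
have Sdev : \sum_j (x j - c) = 0 by rewrite sumrB Sx sumr_const card_ord subrr.
have : \sum_j (x j - c) ^+ 2 = 0.
  transitivity (\sum_j x j ^+ 2 - \sum_(j < n) c ^+ 2 - c *+ 2 * \sum_j (x j - c)).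
    by rewrite mulr_sumr -!sumrB; apply: eq_bigr => j _; rewrite mulr2n; ring.
  by rewrite Sdev mulr0 subr0 Sx2 sumr_const card_ord subrr.
move/eqP; rewrite psumr_eq0 => [/allP/(_ i)|j _]; last exact: sqr_ge0.
by rewrite mem_index_enum sqrf_eq0 subr_eq0 => /(_ isT)/eqP.
Qed.

Lemma card_set_nat_sum (T : finType) (P : pred T) : #|[set w | P w]| = (\sum_w P w)%N.
Proof.
rewrite -sum1_card big_mkcond /=; apply: eq_bigr => w _.
by rewrite inE; case: (P w).
Qed.

Section JoinGraph.
Variables X Y : graph.

Lemma join_adj_ll a b : gadj (join X Y) (lshift _ a) (lshift _ b) = gadj X a b.
Proof. by rewrite /= /join_adj !(unsplitK (inl _ _)). Qed.
Lemma join_adj_lr a b : gadj (join X Y) (lshift _ a) (rshift _ b).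
Proof. by rewrite /= /join_adj (unsplitK (inl _ _)) (unsplitK (inr _ _)). Qed.
Lemma join_adj_rl a b : gadj (join X Y) (rshift _ a) (lshift _ b).
Proof. by rewrite /= /join_adj (unsplitK (inl _ _)) (unsplitK (inr _ _)). Qed.
Lemma join_adj_rr a b : gadj (join X Y) (rshift _ a) (rshift _ b) = gadj Y a b.
Proof. by rewrite /= /join_adj !(unsplitK (inr _ _)). Qed.

Lemma deg_join_l a : deg (join X Y) (lshift _ a) = (deg X a + gsize Y)%N.
Proof.
rewrite /deg card_set_nat_sum big_split_ord card_set_nat_sum.
under eq_bigr => b _ do rewrite join_adj_ll.
under [S in (_ + S = _)%N]eq_bigr => b _ do rewrite join_adj_lr.
by rewrite sum_nat_const card_ord muln1.
Qed.

Lemma deg_join_r b : deg (join X Y) (rshift _ b) = (gsize X + deg Y b)%N.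
Proof.
rewrite /deg card_set_nat_sum big_split_ord [in RHS]card_set_nat_sum.
under eq_bigr => a _ do rewrite join_adj_rl.
under [S in (_ + S = _)%N]eq_bigr => a _ do rewrite join_adj_rr.
by rewrite sum_nat_const card_ord muln1.
Qed.

End JoinGraph.

Lemma deg_complete m (k : 'I_m) : deg (complete m) k = m.-1.
Proof.
rewrite /deg -[in RHS](card_ord m) -(cardsC1 k).
by apply: eq_card => x; rewrite !inE /= /complete_adj eq_sym.
Qed.

Lemma adj_of_deg_pred X v w : deg X v = (gsize X).-1 -> v != w -> gadj X v w.
Proof.
move=> dv vw.
have sub : [set u | gadj X v u] \subset [set~ v].
  by apply/subsetP => u; rewrite !inE; apply: contraTneq => ->; rewrite gadj_irr.
have card_eq : #|[set u | gadj X v u]| = #|[set~ v]| by rewrite cardsC1 card_ord.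
by have := elimT (subset_cardP card_eq) sub w; rewrite !inE eq_sym vw.
Qed.

Lemma deg_isomorphic X Y (f : 'I_(gsize X) -> 'I_(gsize Y)) : bijective f ->
  (forall x y, gadj Y (f x) (f y) = gadj X x y) -> forall x, deg Y (f x) = deg X x.
Proof.
move=> f_bij Ef x; rewrite /deg !card_set_nat_sum (reindex f) /=; last exact: onW_bij.
by apply: eq_bigr => w _; rewrite Ef.
Qed.

Lemma isomorphic_sym X Y : isomorphic X Y -> isomorphic Y X.
Proof.
case=> f [f_bij Ef]; case: (f_bij) => g fK gK.
by exists g; split=> [|x y]; [exists f | rewrite -Ef !gK].
Qed.

Lemma isomorphic_trans X Y Z : isomorphic X Y -> isomorphic Y Z -> isomorphic X Z.
Proof.
case=> f [f_bij Ef] [h [h_bij Eh]]; exists (h \o f).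
by split=> [|x y /=]; [exact: bij_comp | rewrite Eh Ef].
Qed.

Lemma isomorphic_join X Y Z : isomorphic X Y -> isomorphic (join X Z) (join Y Z).
Proof.
case=> f [f_bij Ef]; case: (f_bij) => g fK gK.
pose mapl A B (h : 'I_(gsize A) -> 'I_(gsize B)) (i : 'I_(gsize A + gsize Z)) :=
  unsplit (match split i with inl a => inl (h a) | inr c => inr c end) : 'I_(gsize B + gsize Z).
exists (mapl X Y f); split.
  exists (mapl Y X g) => i; rewrite /mapl unsplitK;
  by case: (split i) (splitK i) => a /= <-; rewrite ?fK ?gK.
move=> x y /=; rewrite /mapl /join_adj !unsplitK.
by case: (split x) => a; case: (split y) => b; rewrite /= ?Ef.
Qed.

Lemma Aalpha_cospectral_isomorphic (R : rcfType) (alpha : R) X Y :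
  isomorphic X Y -> Aalpha_cospectral alpha X Y.
Proof.
case=> f [f_bij Ef].
have eXY : gsize X = gsize Y by have := bij_eq_card f_bij; rewrite !card_ord.
apply: (char_poly_reindex eXY f_bij) => i j.
by rewrite !mxE (deg_isomorphic f_bij Ef) Ef (inj_eq (bij_inj f_bij)).
Qed.

Lemma isomorphic_join_complete_dominating H n m : (0 < m)%N ->
  gsize H = (n + m)%N ->
  (m <= #|[set v | deg H v == (n + m).-1]|)%N ->
  exists2 H' : graph, gsize H' = n & isomorphic (join H' (complete m)) H.
Proof.
move=> m_gt0 eH; set D := [set v | _] => mD.
have adjD v w : v \in D -> v != w -> gadj H v w.
  by rewrite inE -eH => /eqP; exact: adj_of_deg_pred.
have x0 : 'I_(gsize H) by apply: (@Ordinal _ 0); rewrite eH; lia.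
(* Listing the vertices outside D first puts only vertices of D in the last m places. *)
pose s := enum (~: D) ++ enum D.
have card_D : (#|~: D| + #|D| = n + m)%N by rewrite addnC cardsC card_ord.
have size_s : size s = (n + m)%N by rewrite size_cat -!cardE.
have s_uniq : uniq s.
  rewrite cat_uniq !enum_uniq /= andbT; apply/hasPn => x.
  by rewrite !mem_enum in_setC => ->.
pose g (i : 'I_(n + m)) := nth x0 s i.
have g_inj : injective g.
  by move=> i j /eqP; rewrite /g nth_uniq ?size_s // => /eqP /ord_inj.
have gD k : g (rshift n k) \in D.
  rewrite /g /= nth_cat -cardE ifF; last by apply/negbTE; rewrite -leqNgt; lia.
  by rewrite -mem_enum; apply: mem_nth; rewrite -cardE; have := ltn_ord k; lia.
pose adj' (a b : 'I_n) := gadj H (g (lshift m a)) (g (lshift m b)).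
have adj'_sym : symmetric adj' by move=> a b; exact: gadj_sym.
have adj'_irr : irreflexive adj' by move=> a; exact: gadj_irr.
exists (Graph adj'_sym adj'_irr) => //; exists g; split.
  by apply: inj_card_bij => //; rewrite !card_ord eH.
move=> x y; case: (split_ordP x) => a ->; case: (split_ordP y) => b ->.
- by rewrite join_adj_ll.
- by rewrite join_adj_lr gadj_sym adjD // (inj_eq g_inj) eq_rlshift.
- by rewrite join_adj_rl adjD // (inj_eq g_inj) eq_rlshift.
- rewrite join_adj_rr /= /complete_adj; have [->|ab] := eqVneq a b; first exact: gadj_irr.
  by rewrite adjD // (inj_eq g_inj) eq_rshift.
Qed.

Section Aalpha.
Variable R : rcfType.
Variable alpha : R.

Lemma AalphaE X v w : Aalpha alpha X v w =
  alpha * (deg X v)%:R *+ (v == w) + (1 - alpha) * (gadj X v w)%:R.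
Proof. by rewrite !mxE -mulrnAr. Qed.

Lemma deg_sum_adj X v : (deg X v)%:R = \sum_w (gadj X v w)%:R :> R.
Proof. by rewrite /deg card_set_nat_sum natr_sum. Qed.

Lemma row_sum_Aalpha X v : \sum_w Aalpha alpha X v w = (deg X v)%:R.
Proof.
under eq_bigr => w _ do rewrite AalphaE.
rewrite big_split /= -mulr_sumr -deg_sum_adj (bigD1 v) //= eqxx mulr1n big1 ?addr0.
  by ring.
by move=> w /negbTE; rewrite eq_sym => ->.
Qed.

Lemma mulmx_Aalpha_const_mx X r n (c : R) : regular X r ->
  Aalpha alpha X *m (const_mx c : 'M_(gsize X, n)) = r%:R *: const_mx c.
Proof.
move=> rX; apply/matrixP => i j; rewrite !mxE.
under eq_bigr => w _ do rewrite [const_mx c w j]mxE.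
by rewrite -mulr_suml row_sum_Aalpha rX.
Qed.

Lemma mxtrace_Aalpha X : \tr (Aalpha alpha X) = alpha * \sum_v (deg X v)%:R.
Proof.
rewrite mulr_sumr; apply: eq_bigr => v _.
by rewrite AalphaE eqxx gadj_irr mulr0 addr0.
Qed.

(* Off the diagonal, A_alpha(X) v w * A_alpha(X) w v is (1 - alpha)^2 * [v ~ w]. *)
Lemma mxtrace_Aalpha_sqr X : \tr (Aalpha alpha X *m Aalpha alpha X) =
  alpha ^+ 2 * \sum_v (deg X v)%:R ^+ 2 + (1 - alpha) ^+ 2 * \sum_v (deg X v)%:R.
Proof.
rewrite !mulr_sumr -big_split; apply: eq_bigr => v _ /=.
rewrite mxE (bigD1 v) //= !AalphaE eqxx gadj_irr mulr0 addr0 mulr1n -expr2 exprMn.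
rewrite deg_sum_adj (bigD1 v) //= gadj_irr add0r !mulr_sumr; congr (_ + _).
apply: eq_bigr => w wv; rewrite !AalphaE (negbTE wv) eq_sym (negbTE wv).
by rewrite !mulr0n !add0r (@gadj_sym X w v); case: (gadj X v w); rewrite ?mulr1 ?mulr0 ?expr2.
Qed.

Lemma Aalpha_cospectral_deg_sums X Y : alpha != 0 -> Aalpha_cospectral alpha X Y ->
  \sum_v (deg X v)%:R = \sum_w (deg Y w)%:R :> R /\
  \sum_v (deg X v)%:R ^+ 2 = \sum_w (deg Y w)%:R ^+ 2 :> R.
Proof.
move=> alpha_neq0 E; have T1 := mxtrace_char_poly_eq E.
have T2 := mxtrace_char_poly_eq (char_poly_sqr_eq E).
rewrite !mxtrace_Aalpha in T1; rewrite !mxtrace_Aalpha_sqr in T2.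
have S1 := mulfI alpha_neq0 T1; split=> //.
by rewrite S1 in T2; move/addIr/(mulfI (expf_neq0 2 alpha_neq0)): T2.
Qed.

Lemma sum_deg_join_complete (F : nat -> R) X m :
  \sum_v F (deg (join X (complete m)) v) =
  \sum_a F (deg X a + m)%N + F (gsize X + m.-1)%N *+ m.
Proof.
rewrite big_split_ord /=; congr (_ + _).
  by apply: eq_bigr => a _; rewrite deg_join_l.
under eq_bigr => k _ do rewrite deg_join_r deg_complete.
by rewrite sumr_const card_ord.
Qed.

Lemma regular_Aalpha_cospectral_join X Y m r : alpha != 0 -> regular Y r ->
  gsize X = gsize Y ->
  Aalpha_cospectral alpha (join X (complete m)) (join Y (complete m)) -> regular X r.
Proof.
move=> alpha_neq0 rY eXY /(Aalpha_cospectral_deg_sums alpha_neq0) [S1 S2].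
have moment (F : nat -> R) :
    \sum_v F (deg (join X (complete m)) v) = \sum_v F (deg (join Y (complete m)) v) ->
    \sum_a F (deg X a + m)%N = F (r + m)%N *+ gsize X.
  rewrite !sum_deg_join_complete.
  have -> : F (gsize X + m.-1)%N = F (gsize Y + m.-1)%N by rewrite eXY.
  move/addIr ->; under eq_bigr => b _ do rewrite rY.
  by rewrite sumr_const card_ord eXY.
move=> v; have := sum_sqr_eq_const (moment (fun d => d%:R) S1)
  (moment (fun d => d%:R ^+ 2) S2) v.
by move/eqP; rewrite eqr_nat eqn_add2r => /eqP.
Qed.

Section JoinComplete.
Variable m : nat.

Definition complete_block (n : nat) (t : R) : 'M[R]_m :=
  \matrix_(k, k') ((t - alpha * (n + m.-1)%N%:R) *+ (k == k') - (1 - alpha) * (k != k')%:R).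

Lemma char_poly_mx_join_complete X t :
  t%:M - Aalpha alpha (join X (complete m)) =
  block_mx ((t - alpha * m%:R)%:M - Aalpha alpha X) (const_mx (- (1 - alpha)))
           (const_mx (- (1 - alpha))) (complete_block (gsize X) t).
Proof.
apply/matrixP => i j.
case: (split_ordP i) => a ->; case: (split_ordP j) => b ->.
- rewrite block_mxEul [in LHS]mxE !(AalphaE, mxE) join_adj_ll deg_join_l eq_lshift /=.
  by case: (a == b); rewrite ?natrD; ring.
- rewrite block_mxEur [in LHS]mxE !(AalphaE, mxE) join_adj_lr eq_lrshift.
  by rewrite !mulr0n /= mulr1 sub0r add0r.
- rewrite block_mxEdl [in LHS]mxE !(AalphaE, mxE) join_adj_rl eq_rlshift.
  by rewrite !mulr0n /= mulr1 sub0r add0r.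
- rewrite block_mxEdr [in LHS]mxE !(AalphaE, mxE) join_adj_rr deg_join_r deg_complete.
  by rewrite eq_rshift /= /complete_adj; case: (a == b); rewrite /= ?mulr1n ?mulr0n;
    rewrite ?mulr0 ?addr0 ?subr0 ?add0r.
Qed.

(* The Schur complement of t - alpha m - A_alpha(X) in the block matrix above. *)
Definition join_complete_factor (n r : nat) (t : R) : R :=
  \det (complete_block n t - (const_mx (- (1 - alpha)) : 'M_(m, n)) *m
     ((t - alpha * m%:R - r%:R)^-1 *: (const_mx (- (1 - alpha)) : 'M_(n, m)))).

Lemma horner_char_poly_join_complete X r t : regular X r ->
  ~~ root (char_poly (Aalpha alpha X)) (t - alpha * m%:R) ->
  t - alpha * m%:R - r%:R != 0 ->
  (char_poly (Aalpha alpha (join X (complete m)))).[t] =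
  (char_poly (Aalpha alpha X)).[t - alpha * m%:R] * join_complete_factor (gsize X) r t.
Proof.
move=> rX root_X u_neq0; set u := t - alpha * m%:R in root_X u_neq0 *.
set Xu := u%:M - Aalpha alpha X.
have Xu_unit : Xu \in unitmx by rewrite unitmxE unitfE -horner_char_poly.
rewrite !horner_char_poly char_poly_mx_join_complete det_block_mx_schur //.
congr (_ * \det (_ - _)); rewrite -mulmxA; congr (_ *m _).
set C := (const_mx (- (1 - alpha)) : 'M_(gsize X, m)).
have XuC : Xu *m C = (u - r%:R) *: C.
  by rewrite mulmxBl mul_scalar_mx (mulmx_Aalpha_const_mx _ _ rX) -scalerBl.
have EC : C = (u - r%:R)^-1 *: (Xu *m C) by rewrite XuC scalerA mulVf // scale1r.
by rewrite {1}EC -scalemxAr mulKmx.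
Qed.

Lemma Aalpha_cospectral_join_complete X Y r : regular X r -> regular Y r ->
  gsize X = gsize Y ->
  Aalpha_cospectral alpha (join X (complete m)) (join Y (complete m)) ->
  Aalpha_cospectral alpha X Y.
Proof.
move=> rX rY eXY E.
set pJ := char_poly (Aalpha alpha (join X (complete m))).
set pX := char_poly (Aalpha alpha X); set pY := char_poly (Aalpha alpha Y).
set c := alpha * m%:R.
apply: (@poly_eq_off_root _ ((pJ \Po ('X + c%:P)) * pX * pY * ('X - r%:R%:P))).
  have pJc_neq0 : pJ \Po ('X + c%:P) != 0.
    by rewrite comp_poly_eq0 ?size_XaddC // monic_neq0 // char_poly_monic.
  by rewrite !mulf_neq0 ?pJc_neq0 ?polyXsubC_eq0 ?monic_neq0 ?char_poly_monic.
move=> t; rewrite !rootM root_XsubC /root horner_comp hornerD hornerX hornerC.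
rewrite !negb_or => /andP [/andP [/andP [pJ_t pX_t] pY_t] t_r].
have EX := horner_char_poly_join_complete (t := t + c) rX.
have EY := horner_char_poly_join_complete (t := t + c) rY.
rewrite -/c addrK subr_eq0 in EX EY.
have eF : join_complete_factor (gsize Y) r (t + c) = join_complete_factor (gsize X) r (t + c).
  by rewrite eXY.
move: EX EY => /(_ pX_t t_r) EX /(_ pY_t t_r); rewrite eF -E -/pJ => EY.
have factor_neq0 : join_complete_factor (gsize X) r (t + c) != 0.
  by apply: contra pJ_t => /eqP factor0; rewrite EX factor0 mulr0.
by apply: (mulIf factor_neq0); rewrite -EX -EY.
Qed.

End JoinComplete.

End Aalpha.

Unset Implicit Arguments.

Theorem lemma3p5 (R : rcfType) (alpha : R) (G H : graph) (r m : nat) :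
  0 < alpha <= 1 ->
  regular G r ->
  Aalpha_determined alpha G ->
  (1 <= m)%N ->
  Aalpha_cospectral alpha H (join G (complete m)) ->
  (m <= #|[set v : 'I_(gsize H) | deg H v == (gsize G + m - 1)%N]|)%N ->
  isomorphic H (join G (complete m)).
Proof.
move=> /andP [alpha_gt0 _] rG G_det m_gt0 E; rewrite subn1.
have eH := char_poly_size_eq E.
case/(isomorphic_join_complete_dominating m_gt0 eH) => H' eH' iso_H'.
have E' : Aalpha_cospectral alpha (join H' (complete m)) (join G (complete m)).
  exact: etrans (Aalpha_cospectral_isomorphic alpha iso_H') E.
have rH' := regular_Aalpha_cospectral_join (lt0r_neq0 alpha_gt0) rG eH' E'.
have iso_H'G := G_det _ (Aalpha_cospectral_join_complete rH' rG eH' E').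
exact: isomorphic_trans (isomorphic_sym iso_H') (isomorphic_join _ iso_H'G).
Qed.
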